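(* The first-component projection $\pi\colon\mathrm{Calc}^1(\mathcal V)\to\mathrm{Mon}(\mathcal V)$, $(A,\Omega_d)\mapsto A$, has (i) a right adjoint given on objects by $A\mapsto(A,0)$ (the trivial calculus), and (ii) a left adjoint given on objects by $A\mapsto(A,\Omega^1_{A,u})$, the universal first order differential calculus over $A$.
   Context: $\mathcal V$ is a monoidal additive category ($\mathbf{Ab}$-enriched with finite biproducts, tensor additive in each variable) with finite limits and colimits, whose tensor product preserves finite colimits in each variable. A first order differential calculus over a monoid $(A,m,i)$ is an $A$-bimodule $(\Omega,\mu,\nu)$ with $d\colon A\to\Omega$ such that $dm=\nu(d\otimes 1_A)+\mu(1_A\otimes d)$ and $\mu(1_A\otimes d)$ is epi. $\mathrm{Calc}^1(\mathcal V)$ has objects pairs $(A,\Omega_d)$ with $A$ a monoid and $(\Omega_d,d)$ a first order differential calculus over $A$; a morphism $(f,g)\colon(A,\Omega_d)\to(A',\Omega_{d'})$ consists of a monoid morphism $f\colon A\to A'$ and a morphism $g\colon\Omega_d\to\Omega_{d'}$ in $\mathcal V$ that is an $A$-bimodule map $\Omega_d\to f^\ast\Omega_{d'}$ (restriction of scalars along $f$) with $g\circ d=d'\circ f$. The universal calculus $\Omega^1_{A,u}$ is the kernel $\iota_u$ of $m$ with bimodule structure from $A\otimes A$ and $d_u$ defined by $\iota_u d_u=(i\otimes 1_A)\lambda^{-1}-(1_A\otimes i)\rho^{-1}$. *)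

(* hom-sets are MathComp zmodTypes (Ab-enrichment). *)
From HB Require Import structures.
From mathcomp Require Import all_boot all_algebra.
Set Implicit Arguments. Unset Strict Implicit. Unset Printing Implicit Defensive.
Import GRing.Theory.
Local Open Scope ring_scope.

Record Cat := {
  ob :> Type;
  hom : ob -> ob -> zmodType;
  idm : forall a, hom a a;
  comp : forall a b c, hom b c -> hom a b -> hom a c;
  compA : forall a b c d (f : hom c d) (g : hom b c) (h : hom a b),
      comp f (comp g h) = comp (comp f g) h;
  comp1m : forall a b (f : hom a b), comp (idm b) f = f;
  compm1 : forall a b (f : hom a b), comp f (idm a) = f;
  compDl : forall a b c (f f' : hom b c) (g : hom a b),
      comp (f + f') g = comp f g + comp f' g;
  compDr : forall a b c (f : hom b c) (g g' : hom a b),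
      comp f (g + g') = comp f g + comp f g'
}.

Arguments hom {_} _ _.
Arguments idm {_} _.
Arguments comp {_ _ _ _} _ _.
Notation "f \oc g" := (comp f g) (at level 40, left associativity).

Section CatDefs.
Variable C : Cat.

Definition is_zero_object (z : C) : Prop :=
  (forall x (f : hom z x), f = 0) /\ (forall x (f : hom x z), f = 0).

Definition is_biproduct (a b s : C) : Prop :=
  exists (p1 : hom s a) (p2 : hom s b) (i1 : hom a s) (i2 : hom b s),
    [/\ p1 \oc i1 = idm a, p2 \oc i2 = idm b, p1 \oc i2 = 0, p2 \oc i1 = 0
      & i1 \oc p1 + i2 \oc p2 = idm s].

Definition is_kernel (a b : C) (f : hom a b) (k : C) (iota : hom k a) : Prop :=
  f \oc iota = 0 /\
  forall x (h : hom x a), f \oc h = 0 -> exists! u : hom x k, iota \oc u = h.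

Definition is_cokernel (a b : C) (f : hom a b) (q : C) (p : hom b q) : Prop :=
  p \oc f = 0 /\
  forall x (h : hom b x), h \oc f = 0 -> exists! u : hom q x, u \oc p = h.

Definition is_epi (a b : C) (e : hom a b) : Prop :=
  forall x (h1 h2 : hom b x), h1 \oc e = h2 \oc e -> h1 = h2.

(* additive with finite limits and colimits: zero object, binary biproducts,
   kernels and cokernels (equalizers/coequalizers are kernels/cokernels of
   differences) *)
Definition additive_finitely_complete_cocomplete : Prop :=
  (exists z : C, is_zero_object z) /\
  (forall a b : C, exists s : C, is_biproduct a b s) /\
  (forall (a b : C) (f : hom a b), exists k (iota : hom k a), is_kernel f iota) /\
  (forall (a b : C) (f : hom a b), exists q (p : hom b q), is_cokernel f p).

End CatDefs.

Record MonCat := {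
  mcat :> Cat;
  tens : mcat -> mcat -> mcat;
  tensm : forall a b c d, hom a b -> hom c d -> hom (tens a c) (tens b d);
  tun : mcat;
  asc : forall a b c, hom (tens (tens a b) c) (tens a (tens b c));
  asci : forall a b c, hom (tens a (tens b c)) (tens (tens a b) c);
  lun : forall a, hom (tens tun a) a;
  luni : forall a, hom a (tens tun a);
  run : forall a, hom (tens a tun) a;
  runi : forall a, hom a (tens a tun);
  tensm1 : forall a b, tensm (idm a) (idm b) = idm (tens a b);
  tensm_comp : forall a b c a' b' c' (f : hom b c) (f' : hom a b)
      (g : hom b' c') (g' : hom a' b'),
      tensm (f \oc f') (g \oc g')
      = tensm f g \oc tensm f' g';
  tensmDl : forall a b c d (f f' : hom a b) (g : hom c d),
      tensm (f + f') g = tensm f g + tensm f' g;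
  tensmDr : forall a b c d (f : hom a b) (g g' : hom c d),
      tensm f (g + g') = tensm f g + tensm f g';
  asc_nat : forall a b c d e f (x : hom a b) (y : hom c d) (z : hom e f),
      asc b d f \oc tensm (tensm x y) z
      = tensm x (tensm y z) \oc asc a c e;
  lun_nat : forall a b (f : hom a b),
      lun b \oc tensm (idm tun) f = f \oc lun a;
  run_nat : forall a b (f : hom a b),
      run b \oc tensm f (idm tun) = f \oc run a;
  asc_iso : forall a b c,
      asc a b c \oc asci a b c = idm _ /\ asci a b c \oc asc a b c = idm _;
  lun_iso : forall a, lun a \oc luni a = idm _ /\ luni a \oc lun a = idm _;
  run_iso : forall a, run a \oc runi a = idm _ /\ runi a \oc run a = idm _;
  pentagon : forall a b c d,
      asc a b (tens c d) \oc asc (tens a b) c d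
      = tensm (idm a) (asc b c d) \oc asc a (tens b c) d
        \oc tensm (asc a b c) (idm d);
  triangle : forall a b,
      tensm (idm a) (lun b) \oc asc a tun b
      = tensm (run a) (idm b)
}.

Arguments tens {_} _ _.
Arguments tensm {_ _ _ _ _} _ _.
Arguments tun {_}.
Arguments asc {_} _ _ _.
Arguments asci {_} _ _ _.
Arguments lun {_} _.
Arguments luni {_} _.
Arguments run {_} _.
Arguments runi {_} _.
Notation "a \ox b" := (tens a b) (at level 40, left associativity).
Notation "f \ot g" := (tensm f g) (at level 40, left associativity).

Section MonDefs.
Variable M : MonCat.

(* the tensor product preserves finite colimits in each variable; for an
   additive tensor (which automatically preserves the zero object and finite
   biproducts) this amounts to preserving cokernels in each variable *)
Definition tensor_preserves_finite_colimits : Prop :=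
  forall (x a b q : M) (f : hom a b) (p : hom b q),
    is_cokernel f p ->
    is_cokernel (idm x \ot f) (idm x \ot p) /\ is_cokernel (f \ot idm x) (p \ot idm x).

Definition is_monoid (A : M) (m : hom (A \ox A) A) (i : hom tun A) : Prop :=
  [/\ m \oc (m \ot idm A) = m \oc (idm A \ot m) \oc asc A A A,
      m \oc (i \ot idm A) = lun A
    & m \oc (idm A \ot i) = run A].

Record MonoidIn := {
  mob :> M;
  mmul : hom (mob \ox mob) mob;
  munit : hom tun mob;
  monoid_ax : is_monoid mmul munit
}.

Definition is_monoid_mor (A B : MonoidIn) (f : hom A B) : Prop :=
  f \oc mmul A = mmul B \oc (f \ot f) /\ f \oc munit A = munit B.

Definition is_bimodule (A : MonoidIn) (W : M)
    (mu : hom (A \ox W) W) (nu : hom (W \ox A) W) : Prop :=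
  [/\ mu \oc (mmul A \ot idm W) = mu \oc (idm A \ot mu) \oc asc A A W,
      mu \oc (munit A \ot idm W) = lun W,
      nu \oc (idm W \ot mmul A) \oc asc W A A = nu \oc (nu \ot idm A),
      nu \oc (idm W \ot munit A) = run W
    & nu \oc (mu \ot idm A) = mu \oc (idm A \ot nu) \oc asc A W A].

Definition is_bimodule_map (A : MonoidIn) (W W' : M)
    (mu : hom (A \ox W) W) (nu : hom (W \ox A) W)
    (mu' : hom (A \ox W') W') (nu' : hom (W' \ox A) W') (g : hom W W') : Prop :=
  g \oc mu = mu' \oc (idm A \ot g) /\ g \oc nu = nu' \oc (g \ot idm A).

Definition res_left (A B : MonoidIn) (f : hom A B) (W : M) (mu : hom (B \ox W) W)
  : hom (A \ox W) W := mu \oc (f \ot idm W).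
Definition res_right (A B : MonoidIn) (f : hom A B) (W : M) (nu : hom (W \ox B) W)
  : hom (W \ox A) W := nu \oc (idm W \ot f).

Definition is_calculus (A : MonoidIn) (W : M)
    (mu : hom (A \ox W) W) (nu : hom (W \ox A) W) (d : hom A W) : Prop :=
  [/\ is_bimodule mu nu,
      d \oc mmul A = nu \oc (d \ot idm A) + mu \oc (idm A \ot d)
    & is_epi (mu \oc (idm A \ot d))].

Definition is_calc_mor (A : MonoidIn) (W : M)
    (mu : hom (A \ox W) W) (nu : hom (W \ox A) W) (d : hom A W)
    (B : MonoidIn) (W' : M)
    (mu' : hom (B \ox W') W') (nu' : hom (W' \ox B) W') (d' : hom B W')
    (f : hom A B) (g : hom W W') : Prop :=
  [/\ is_monoid_mor f,
      is_bimodule_map mu nu (res_left f mu') (res_right f nu') g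
    & g \oc d = d' \oc f].

Definition AA_left (A : MonoidIn) : hom (A \ox (A \ox A)) (A \ox A) :=
  (mmul A \ot idm A) \oc asci A A A.
Definition AA_right (A : MonoidIn) : hom ((A \ox A) \ox A) (A \ox A) :=
  (idm A \ot mmul A) \oc asc A A A.

End MonDefs.

(* A zero object is terminal, so every calculus maps uniquely to the zero
   calculus over the same monoid; this gives (i), with identity counit.
   For (ii), a calculus morphism is determined by its monoid part because
   [mu (1 (x) d)] is epi.  Conversely, a monoid map [f : A -> B] into a calculus
   [(B, W)] lifts to [Omega_u = ker m] as the restriction of
   [a (x) b |-> f a * d (f b)]: it commutes with [d_u] because [d 1 = 0], and
   with the right action by the Leibniz rule, the extra term being killed by [m]
   on [ker m].  The calculus axioms of [Omega_u] are checked through the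
   monomorphism [iota]; its epi condition holds because [iota] splits
   [mu_u (1 (x) d_u)]. *)

From Pilot Require Import Defs.
From mathcomp Require Import ssreflect ssrfun ssrbool eqtype ssralg.
Set Implicit Arguments. Unset Strict Implicit. Unset Printing Implicit Defensive.
Import GRing.Theory.
Local Open Scope ring_scope.

Local Notation hom := Defs.hom.
Local Notation compA := Defs.compA.

Section EnrichedCategory.
Variable C : Cat.
Implicit Types a b c x : C.

Lemma comp0l a b c (g : hom a b) : (0 : hom b c) \oc g = 0.
Proof.
have E := compDl (0 : hom b c) 0 g; rewrite addr0 in E.
by apply: (@addrI _ (0 \oc g)); rewrite -E addr0.
Qed.

Lemma comp0r a b c (f : hom b c) : f \oc (0 : hom a b) = 0.
Proof.
have E := compDr f (0 : hom a b) 0; rewrite addr0 in E.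
by apply: (@addrI _ (f \oc 0)); rewrite -E addr0.
Qed.

Lemma compNl a b c (f : hom b c) (g : hom a b) : (- f) \oc g = - (f \oc g).
Proof. by apply/eqP; rewrite -addr_eq0 -compDl addNr comp0l. Qed.

Lemma compNr a b c (f : hom b c) (g : hom a b) : f \oc (- g) = - (f \oc g).
Proof. by apply/eqP; rewrite -addr_eq0 -compDr addNr comp0r. Qed.

Lemma compBl a b c (f f' : hom b c) (g : hom a b) : (f - f') \oc g = f \oc g - f' \oc g.
Proof. by rewrite compDl compNl. Qed.

Lemma compBr a b c (f : hom b c) (g g' : hom a b) : f \oc (g - g') = f \oc g - f \oc g'.
Proof. by rewrite compDr compNr. Qed.

Lemma kernel_monic a b (f : hom a b) k (iota : hom k a) :
  is_kernel f iota -> forall x (u1 u2 : hom x k), iota \oc u1 = iota \oc u2 -> u1 = u2.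
Proof.
move=> [fiota0 univ] x u1 u2 E.
have f_iota_u1 : f \oc (iota \oc u1) = 0 by rewrite compA fiota0 comp0l.
have [u [_ uniq_u]] := univ x _ f_iota_u1.
by rewrite -(uniq_u u1 erefl) (uniq_u u2 (esym E)).
Qed.

Lemma split_epi a b (e : hom a b) (s : hom b a) : e \oc s = idm b -> is_epi e.
Proof. by move=> es x h1 h2 E; rewrite -(compm1 h1) -(compm1 h2) -es !compA E. Qed.

Lemma split_mono_cancel a b c (q : hom b c) (r : hom c b) (h1 h2 : hom a b) :
  r \oc q = idm b -> q \oc h1 = q \oc h2 -> h1 = h2.
Proof. by move=> rq E; rewrite -(comp1m h1) -(comp1m h2) -rq -!compA E. Qed.

Lemma comp_canRL a b c (q : hom a b) (s : hom b a) (h : hom b c) (k : hom a c) :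
  q \oc s = idm b -> h \oc q = k -> h = k \oc s.
Proof. by move=> qs <-; rewrite -compA qs compm1. Qed.

End EnrichedCategory.

Section MonoidalCategory.
Variable V : MonCat.
Implicit Types a b c d x : V.

Lemma tensm0l a b c d (g : hom c d) : (0 : hom a b) \ot g = 0.
Proof.
have E := tensmDl (0 : hom a b) 0 g; rewrite addr0 in E.
by apply: (@addrI _ (0 \ot g)); rewrite -E addr0.
Qed.

Lemma tensm0r a b c d (f : hom a b) : f \ot (0 : hom c d) = 0.
Proof.
have E := tensmDr f (0 : hom c d) 0; rewrite addr0 in E.
by apply: (@addrI _ (f \ot 0)); rewrite -E addr0.
Qed.

Lemma tensmNl a b c d (f : hom a b) (g : hom c d) : (- f) \ot g = - (f \ot g).
Proof. by apply/eqP; rewrite -addr_eq0 -tensmDl addNr tensm0l. Qed.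

Lemma tensmNr a b c d (f : hom a b) (g : hom c d) : f \ot (- g) = - (f \ot g).
Proof. by apply/eqP; rewrite -addr_eq0 -tensmDr addNr tensm0r. Qed.

Lemma tensmBl a b c d (f f' : hom a b) (g : hom c d) : (f - f') \ot g = f \ot g - f' \ot g.
Proof. by rewrite tensmDl tensmNl. Qed.

Lemma tensmBr a b c d (f : hom a b) (g g' : hom c d) : f \ot (g - g') = f \ot g - f \ot g'.
Proof. by rewrite tensmDr tensmNr. Qed.

Lemma tensm_compl a b c x (f : hom b c) (f' : hom a b) :
  (f \oc f') \ot idm x = (f \ot idm x) \oc (f' \ot idm x).
Proof. by rewrite -tensm_comp comp1m. Qed.

Lemma tensm_compr a b c x (g : hom b c) (g' : hom a b) :
  idm x \ot (g \oc g') = (idm x \ot g) \oc (idm x \ot g').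
Proof. by rewrite -tensm_comp comp1m. Qed.

Lemma tensm_compl_outer a b c a' b' (f : hom b c) (f' : hom a b) (g : hom a' b') :
  (f \oc f') \ot g = (f \ot idm b') \oc (f' \ot g).
Proof. by rewrite -tensm_comp comp1m. Qed.

Lemma tensm_compl_inner a b c a' b' (f : hom b c) (f' : hom a b) (g : hom a' b') :
  (f \oc f') \ot g = (f \ot g) \oc (f' \ot idm a').
Proof. by rewrite -tensm_comp compm1. Qed.

Lemma tensm_compr_outer a b a' b' c' (f : hom a b) (g : hom b' c') (g' : hom a' b') :
  f \ot (g \oc g') = (idm b \ot g) \oc (f \ot g').
Proof. by rewrite -tensm_comp comp1m. Qed.

Lemma tensm_compr_inner a b a' b' c' (f : hom a b) (g : hom b' c') (g' : hom a' b') :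
  f \ot (g \oc g') = (f \ot g) \oc (idm a \ot g').
Proof. by rewrite -tensm_comp compm1. Qed.

Lemma tensm_lr a b c d (f : hom a b) (g : hom c d) :
  f \ot g = (f \ot idm d) \oc (idm a \ot g).
Proof. by rewrite -tensm_comp comp1m compm1. Qed.

Lemma tensm_rl a b c d (f : hom a b) (g : hom c d) :
  f \ot g = (idm b \ot g) \oc (f \ot idm c).
Proof. by rewrite -tensm_comp comp1m compm1. Qed.

Lemma tensm_compl_eq1 a b x (f : hom a b) (g : hom b a) :
  f \oc g = idm b -> (f \ot idm x) \oc (g \ot idm x) = idm (b \ox x).
Proof. by move=> fg; rewrite -tensm_compl fg tensm1. Qed.

Lemma tensm_compr_eq1 a b x (f : hom a b) (g : hom b a) :
  f \oc g = idm b -> (idm x \ot f) \oc (idm x \ot g) = idm (x \ox b).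
Proof. by move=> fg; rewrite -tensm_compr fg tensm1. Qed.

Lemma tensm_idr_tun_inj a b (f g : hom a b) : f \ot idm tun = g \ot idm tun -> f = g.
Proof.
move=> E; apply: (split_epi (run_iso a).1); by rewrite -!run_nat E.
Qed.

Lemma tensm_idl_tun_inj a b (f g : hom a b) : idm tun \ot f = idm tun \ot g -> f = g.
Proof.
move=> E; apply: (split_epi (lun_iso a).1); by rewrite -!lun_nat E.
Qed.

Lemma asci_nat a b c d e f (x : hom a b) (y : hom c d) (z : hom e f) :
  asci b d f \oc (x \ot (y \ot z)) = (x \ot y \ot z) \oc asci a c e.
Proof.
apply: (comp_canRL (asc_iso _ _ _).1).
by rewrite -compA -asc_nat compA (asc_iso _ _ _).2 comp1m.
Qed.

Lemma luni_nat a b (f : hom a b) : luni b \oc f = (idm tun \ot f) \oc luni a.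
Proof.
apply: (comp_canRL (lun_iso _).1).
by rewrite -compA -lun_nat compA (lun_iso _).2 comp1m.
Qed.

Lemma runi_nat a b (f : hom a b) : runi b \oc f = (f \ot idm tun) \oc runi a.
Proof.
apply: (comp_canRL (run_iso _).1).
by rewrite -compA -run_nat compA (run_iso _).2 comp1m.
Qed.

Lemma pentagonA a b c d :
  asc a b (c \ox d) \oc asc (a \ox b) c d
  = (idm a \ot asc b c d) \oc (asc a (b \ox c) d \oc (asc a b c \ot idm d)).
Proof. by rewrite compA pentagon. Qed.

Lemma pentagon_asci_asci a b c d :
  asci a (b \ox c) d \oc (idm a \ot asci b c d) \oc asc a b (c \ox d)
  = (asc a b c \ot idm d) \oc asci (a \ox b) c d.
Proof.
apply: (comp_canRL (asc_iso _ _ _).1).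
rewrite -compA pentagon !compA -[X in X \oc asc _ _ _ \oc _]compA.
by rewrite tensm_compr_eq1 ?(asc_iso _ _ _).2 // compm1 (asc_iso _ _ _).2 comp1m.
Qed.

Lemma pentagon_asci_asc a b c d :
  asci a b (c \ox d) \oc (idm a \ot asc b c d) \oc asc a (b \ox c) d
  = asc (a \ox b) c d \oc (asci a b c \ot idm d).
Proof.
apply: (comp_canRL (tensm_compl_eq1 _ (asc_iso _ _ _).1)).
by rewrite -!compA -pentagonA compA (asc_iso _ _ _).2 comp1m.
Qed.

Lemma triangle_asci a b : (run a \ot idm b) \oc asci a tun b = idm a \ot lun b.
Proof. by symmetry; apply: (comp_canRL (asc_iso _ _ _).1); rewrite triangle. Qed.

(* Kelly's redundant axioms, consequences of the pentagon and the triangle. *)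
Lemma run_tens_asc a b : (idm a \ot run b) \oc asc a b tun = run (a \ox b).
Proof.
apply: tensm_idr_tun_inj.
apply: (split_mono_cancel (asc_iso a b tun).2).
rewrite -triangle -[idm (a \ox b)]tensm1 compA asc_nat -compA pentagon.
by rewrite !compA -tensm_compr triangle -asc_nat -compA -tensm_compl.
Qed.

Lemma lun_tens_asc a b : lun (a \ox b) \oc asc tun a b = lun a \ot idm b.
Proof.
apply: tensm_idl_tun_inj.
pose q := asc tun (tun \ox a) b \oc (asc tun tun a \ot idm b).
pose qi := (asci tun tun a \ot idm b) \oc asci tun (tun \ox a) b.
have q_qi : q \oc qi = idm _.
  rewrite /q /qi -compA [X in asc _ _ _ \oc X]compA -tensm_compl (asc_iso _ _ _).1.
  by rewrite tensm1 comp1m (asc_iso _ _ _).1.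
apply: (split_epi q_qi).
rewrite /q tensm_compr -!compA -pentagonA compA triangle -[idm (a \ox b)]tensm1.
transitivity (asc tun a b \oc ((run tun \ot idm a) \ot idm b)); first by rewrite asc_nat.
by rewrite [RHS]compA -asc_nat -compA -tensm_compl triangle.
Qed.

Lemma lun_tens_asci a b : (lun a \ot idm b) \oc asci tun a b = lun (a \ox b).
Proof. by symmetry; apply: (comp_canRL (asc_iso _ _ _).1); rewrite lun_tens_asc. Qed.

Lemma luni_tens_asc a b : asc tun a b \oc (luni a \ot idm b) = luni (a \ox b).
Proof.
rewrite -[RHS]comp1m; apply: (comp_canRL (lun_iso _).1).
rewrite -lun_tens_asci !compA -[X in X \oc asci _ _ _]compA.
by rewrite tensm_compl_eq1 ?(lun_iso _).2 // compm1 (asc_iso _ _ _).1.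
Qed.

Lemma runi_tens_asci a b : asci a b tun \oc (idm a \ot runi b) = runi (a \ox b).
Proof.
rewrite -[RHS]comp1m; apply: (comp_canRL (run_iso _).1).
rewrite -run_tens_asc !compA -[X in X \oc asc _ _ _]compA.
by rewrite tensm_compr_eq1 ?(run_iso _).2 // compm1 (asc_iso _ _ _).2.
Qed.

End MonoidalCategory.

Section Monoids.
Variable V : MonCat.

Section MonoidAxioms.
Variable A : MonoidIn V.
Local Notation m := (mmul A).
Local Notation i := (munit A).

Lemma mmulA : m \oc (m \ot idm A) = m \oc (idm A \ot m) \oc asc A A A.
Proof. by case: (monoid_ax A). Qed.

Lemma mmul_unitl : m \oc (i \ot idm A) = lun A.
Proof. by case: (monoid_ax A). Qed.

Lemma mmul_unitr : m \oc (idm A \ot i) = run A.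
Proof. by case: (monoid_ax A). Qed.

Lemma monoid_mor_id : is_monoid_mor (idm A).
Proof. by split; rewrite comp1m ?tensm1 ?compm1. Qed.

(* [unit_tensl A] is [a |-> 1 (x) a] and [unit_tensr A] is [a |-> a (x) 1]. *)
Definition unit_tensl : hom A (A \ox A) := (i \ot idm A) \oc luni A.
Definition unit_tensr : hom A (A \ox A) := (idm A \ot i) \oc runi A.

Lemma AA_right_unit_tensl : AA_right A \oc (unit_tensl \ot idm A) = unit_tensl \oc m.
Proof.
rewrite /AA_right /unit_tensl tensm_compl -!compA (compA (asc _ _ _)) asc_nat tensm1.
rewrite -!compA (compA (idm A \ot m)) -tensm_rl.
by rewrite luni_tens_asc luni_nat compA -tensm_lr.
Qed.

Lemma AA_right_unit_tensr : AA_right A \oc (unit_tensr \ot idm A) = idm _.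
Proof.
rewrite /AA_right /unit_tensr tensm_compl -!compA (compA (asc _ _ _)) asc_nat.
rewrite -!compA (compA (idm A \ot m)) -tensm_compr mmul_unitl.
by rewrite (compA (idm A \ot lun A)) triangle tensm_compl_eq1 // (run_iso _).1.
Qed.

Lemma AA_left_unit_tensl : AA_left A \oc (idm A \ot unit_tensl) = idm _.
Proof.
rewrite /AA_left /unit_tensl tensm_compr -!compA (compA (asci _ _ _)) asci_nat.
rewrite -!compA (compA (m \ot idm A)) -tensm_compl mmul_unitr.
by rewrite (compA (run A \ot idm A)) triangle_asci tensm_compr_eq1 // (lun_iso _).1.
Qed.

Lemma AA_left_unit_tensr : AA_left A \oc (idm A \ot unit_tensr) = unit_tensr \oc m.
Proof.
rewrite /AA_left /unit_tensr tensm_compr -!compA (compA (asci _ _ _)) asci_nat tensm1.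
rewrite -!compA (compA (m \ot idm A)) -tensm_lr.
by rewrite runi_tens_asci runi_nat compA -tensm_rl.
Qed.

End MonoidAxioms.

(* Leibniz rule at [1 * 1] gives [d 1 = d 1 + d 1]. *)
Lemma calculus_d_unit (B : MonoidIn V) (W : V) (mu : hom (B \ox W) W)
    (nu : hom (W \ox B) W) (d : hom B W) :
  is_calculus mu nu d -> d \oc munit B = 0.
Proof.
case=> [[_ mu_unit _ nu_unit _] leibniz _].
set x := d \oc munit B.
have d_mul_units : x \oc lun tun = d \oc mmul B \oc (munit B \ot munit B).
  by rewrite /x -compA -lun_nat -mmul_unitl -!compA -tensm_lr.
have nu_term : nu \oc (d \ot idm B) \oc (munit B \ot munit B) = x \oc run tun.
  by rewrite -compA -tensm_comp comp1m (tensm_rl x) compA nu_unit run_nat.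
have mu_term : mu \oc (idm B \ot d) \oc (munit B \ot munit B) = x \oc lun tun.
  by rewrite -compA -tensm_comp comp1m (tensm_lr _ x) compA mu_unit lun_nat.
have x_run0 : x \oc run tun = 0.
  apply: (@addIr _ (x \oc lun tun)).
  by rewrite add0r {2}d_mul_units leibniz compDl nu_term mu_term.
by rewrite -[x]compm1 -(run_iso _).1 compA x_run0 comp0l.
Qed.

End Monoids.

Section Calculi.
Variable V : MonCat.

Lemma calc_mor_unique (A : MonoidIn V) (W : V) (mu : hom (A \ox W) W)
    (nu : hom (W \ox A) W) (d : hom A W) (B : MonoidIn V) (W' : V)
    (mu' : hom (B \ox W') W') (nu' : hom (W' \ox B) W') (d' : hom B W')
    (f : hom A B) (g1 g2 : hom W W') :
  is_calculus mu nu d ->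
  is_calc_mor mu nu d mu' nu' d' f g1 -> is_calc_mor mu nu d mu' nu' d' f g2 ->
  g1 = g2.
Proof.
case=> _ _ epi [_ [g1_mu _] g1_d] [_ [g2_mu _] g2_d].
apply: epi; rewrite !compA g1_mu g2_mu /res_left -!compA -!tensm_compr.
by rewrite g1_d g2_d.
Qed.

Lemma zero_object_hom_eq (Z x : V) (f g : hom x Z) : is_zero_object Z -> f = g.
Proof. by case=> _ to_Z; rewrite (to_Z x f) (to_Z x g). Qed.

Lemma zero_calculus (B : MonoidIn V) (Z : V) :
  is_zero_object Z ->
  is_calculus (0 : hom (B \ox Z) Z) (0 : hom (Z \ox B) Z) (0 : hom B Z).
Proof.
move=> zZ; split; [split|..]; try exact: zero_object_hom_eq.
by move=> x h1 h2 _; rewrite (zZ.1 x h1) (zZ.1 x h2).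
Qed.

Lemma calc_mor_to_zero (A B : MonoidIn V) (W Z : V) (mu : hom (A \ox W) W)
    (nu : hom (W \ox A) W) (d : hom A W) (f : hom A B) :
  is_zero_object Z -> is_monoid_mor f ->
  is_calc_mor mu nu d (0 : hom (B \ox Z) Z) (0 : hom (Z \ox B) Z) (0 : hom B Z) f 0.
Proof.
move=> zZ f_mor.
by split=> //; [split | ]; apply: zero_object_hom_eq.
Qed.

End Calculi.

Section UniversalCalculus.
Variables (V : MonCat) (A : MonoidIn V).
Local Notation m := (mmul A).
Local Notation i := (munit A).
Variables (K : V) (iota : hom K (A \ox A)) (mu_u : hom (A \ox K) K)
  (nu_u : hom (K \ox A) K) (d_u : hom A K).
Hypothesis iota_ker : is_kernel m iota.
Hypothesis iota_mu_u : iota \oc mu_u = AA_left A \oc (idm A \ot iota).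
Hypothesis iota_nu_u : iota \oc nu_u = AA_right A \oc (iota \ot idm A).
Hypothesis iota_d_u : iota \oc d_u = unit_tensl A - unit_tensr A.

Lemma univ_mu_assoc : mu_u \oc (m \ot idm K) = mu_u \oc (idm A \ot mu_u) \oc asc A A K.
Proof.
apply: (kernel_monic iota_ker).
transitivity (((m \oc (m \ot idm A)) \ot idm A)
                \oc (asci (A \ox A) A A \oc (idm (A \ox A) \ot iota))).
  rewrite compA iota_mu_u /AA_left -!compA -tensm_rl (tensm_lr m iota).
  rewrite -[idm (A \ox A)]tensm1 [X in _ \oc X]compA asci_nat !compA -tensm_compl //.
rewrite mmulA ![in RHS]compA iota_mu_u /AA_left -!compA.
rewrite (compA (idm A \ot iota)) -tensm_compr iota_mu_u /AA_left !tensm_compr -!compA.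
rewrite -asc_nat (compA (asci A A A)) asci_nat -!compA.
rewrite -[idm (A \ox A)]tensm1 !tensm_compl -!compA (compA (asc A A A \ot idm A)).
by rewrite -pentagon_asci_asci -!compA.
Qed.

Lemma univ_mu_unit : mu_u \oc (i \ot idm K) = lun K.
Proof.
apply: (kernel_monic iota_ker).
rewrite compA iota_mu_u /AA_left -!compA -tensm_rl (tensm_lr i iota).
rewrite -[idm (A \ox A)]tensm1 [X in _ \oc X]compA asci_nat !compA -tensm_compl.
by rewrite mmul_unitl lun_tens_asci lun_nat.
Qed.

Lemma univ_nu_assoc : nu_u \oc (idm K \ot m) \oc asc K A A = nu_u \oc (nu_u \ot idm A).
Proof.
apply: (kernel_monic iota_ker).
transitivity ((idm A \ot (m \oc (m \ot idm A)))
                \oc (asc A (A \ox A) A \oc ((asc A A A \ot idm A)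
                \oc ((iota \ot idm A) \ot idm A)))).
  rewrite ![in LHS]compA iota_nu_u /AA_right -!compA (compA (iota \ot idm A)).
  rewrite -tensm_lr (tensm_rl iota m) -[idm (A \ox A)]tensm1 -!compA.
  rewrite (compA (asc A A A)) asc_nat -!compA -asc_nat (compA (asc A A (A \ox A))).
  rewrite pentagonA -!compA !(compA (idm A \ot _)) -!tensm_compr mmulA.
  by rewrite !compA -tensm_compr.
rewrite [in RHS]compA iota_nu_u /AA_right -!compA -(tensm_compl _ iota nu_u).
rewrite iota_nu_u /AA_right !tensm_compl -!compA (compA (asc A A A)) asc_nat.
by rewrite -!compA (compA (idm A \ot m)) -tensm_compr.
Qed.

Lemma univ_nu_unit : nu_u \oc (idm K \ot i) = run K.
Proof.
apply: (kernel_monic iota_ker).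
rewrite compA iota_nu_u /AA_right -!compA -tensm_lr (tensm_rl iota i).
rewrite -[idm (A \ox A)]tensm1 [X in _ \oc X]compA asc_nat !compA -tensm_compr.
by rewrite mmul_unitr run_tens_asc run_nat.
Qed.

Lemma univ_mu_nu_compat :
  nu_u \oc (mu_u \ot idm A) = mu_u \oc (idm A \ot nu_u) \oc asc A K A.
Proof.
apply: (kernel_monic iota_ker).
transitivity ((m \ot m) \oc (asc (A \ox A) A A \oc ((asci A A A \ot idm A)
                \oc ((idm A \ot iota) \ot idm A)))).
  rewrite compA iota_nu_u /AA_right -!compA -(tensm_compl _ iota mu_u).
  rewrite iota_mu_u /AA_left !tensm_compl -!compA (compA (asc A A A)) asc_nat tensm1.
  by rewrite -!compA (compA (idm A \ot m)) -tensm_rl.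
rewrite [in RHS]compA [in RHS]compA iota_mu_u /AA_left -!compA (compA (idm A \ot iota)).
rewrite -tensm_compr iota_nu_u /AA_right !tensm_compr -!compA (compA (asci A A A)).
rewrite asci_nat tensm1 -!compA (compA (m \ot idm A)) -tensm_lr -asc_nat.
by rewrite (compA (asci _ _ _)) (compA (asci _ _ _ \oc _)) pentagon_asci_asc -!compA.
Qed.

Lemma univ_bimodule : is_bimodule mu_u nu_u.
Proof.
split; [exact: univ_mu_assoc | exact: univ_mu_unit | exact: univ_nu_assoc
       | exact: univ_nu_unit | exact: univ_mu_nu_compat].
Qed.

Lemma univ_leibniz : d_u \oc m = nu_u \oc (d_u \ot idm A) + mu_u \oc (idm A \ot d_u).
Proof.
apply: (kernel_monic iota_ker).
rewrite compDr (compA iota d_u) iota_d_u compBl.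
rewrite (compA iota nu_u) iota_nu_u -(compA (AA_right A)) -(tensm_compl _ iota d_u).
rewrite iota_d_u tensmBl compBr.
rewrite (compA iota mu_u) iota_mu_u -(compA (AA_left A)) -(tensm_compr _ iota d_u).
rewrite iota_d_u tensmBr compBr.
rewrite AA_right_unit_tensl AA_right_unit_tensr AA_left_unit_tensl AA_left_unit_tensr.
by rewrite addrA subrK.
Qed.

Lemma iota_univ_mu_d_u :
  iota \oc (mu_u \oc (idm A \ot d_u)) = idm _ - unit_tensr A \oc m.
Proof.
rewrite (compA iota mu_u) iota_mu_u -(compA (AA_left A)) -(tensm_compr _ iota d_u).
by rewrite iota_d_u tensmBr compBr AA_left_unit_tensl AA_left_unit_tensr.
Qed.

(* [iota] is a section: on [ker m], [a (x) b |-> a d_u b = a (x) b - a b (x) 1]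
   is the identity. *)
Lemma univ_epi : is_epi (mu_u \oc (idm A \ot d_u)).
Proof.
apply: (split_epi (s := iota)); apply: (kernel_monic iota_ker).
rewrite compA iota_univ_mu_d_u compBl comp1m compm1 -!compA.
by case: iota_ker => -> _; rewrite !comp0r subr0.
Qed.

Lemma univ_calculus : is_calculus mu_u nu_u d_u.
Proof. by split; [exact: univ_bimodule | exact: univ_leibniz | exact: univ_epi]. Qed.

Section Lift.
Variables (B : MonoidIn V) (W : V) (mu : hom (B \ox W) W) (nu : hom (W \ox B) W)
  (d : hom B W).
Hypothesis W_calc : is_calculus mu nu d.
Variable f : hom A B.
Hypothesis f_mor : is_monoid_mor f.

(* [a (x) b |-> f a * d (f b)], restricted to [K] by [iota]. *)
Definition lift_AA : hom (A \ox A) W := mu \oc (f \ot (d \oc f)).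
Definition univ_lift : hom K W := lift_AA \oc iota.

Lemma lift_AA_unit_tensl : lift_AA \oc unit_tensl A = d \oc f.
Proof.
case: W_calc => [[_ mu_unit _ _ _] _ _].
rewrite /lift_AA /unit_tensl compA -(compA mu) -tensm_comp compm1 f_mor.2.
rewrite (tensm_lr (munit B) (d \oc f)) compA mu_unit.
by rewrite lun_nat -compA (lun_iso _).1 compm1.
Qed.

Lemma lift_AA_unit_tensr : lift_AA \oc unit_tensr A = 0.
Proof.
rewrite /lift_AA /unit_tensr compA -(compA mu) -tensm_comp compm1 -(compA d f).
by rewrite f_mor.2 (calculus_d_unit W_calc) tensm0r comp0r comp0l.
Qed.

Lemma univ_lift_d : univ_lift \oc d_u = d \oc f.
Proof.
rewrite /univ_lift -compA iota_d_u compBr lift_AA_unit_tensl lift_AA_unit_tensr.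
by rewrite subr0.
Qed.

Lemma lift_AA_mul_idr : lift_AA \oc (m \ot idm A)
  = mu \oc (idm B \ot mu) \oc (f \ot (f \ot (d \oc f))) \oc asc A A A.
Proof.
case: W_calc => [[mu_assoc _ _ _ _] _ _].
rewrite /lift_AA -compA -tensm_comp compm1 f_mor.1 tensm_compl_outer compA mu_assoc.
by rewrite -(compA _ (asc B B W)) asc_nat !compA.
Qed.

Lemma univ_lift_left : univ_lift \oc mu_u = res_left f mu \oc (idm A \ot univ_lift).
Proof.
transitivity (mu \oc (idm B \ot mu)
                \oc ((f \ot (f \ot (d \oc f))) \oc (idm A \ot iota))).
  rewrite /univ_lift -compA iota_mu_u /AA_left !compA lift_AA_mul_idr -!compA.
  by rewrite (compA (asc A A A)) (asc_iso _ _ _).1 comp1m.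
rewrite /res_left /univ_lift /lift_AA -[in RHS]compA -[in RHS]tensm_comp compm1 comp1m.
by rewrite -[in RHS](compA mu) [in RHS]tensm_compr_outer -tensm_compr_inner compA.
Qed.

(* Leibniz: [f a * d (f b * f c) = (f a * d (f b)) * f c + f a * f b * d (f c)]. *)
Lemma lift_AA_idl_mul : lift_AA \oc (idm A \ot m) \oc asc A A A
  = nu \oc (idm W \ot f) \oc (lift_AA \ot idm A) + lift_AA \oc (m \ot idm A).
Proof.
case: W_calc => [[mu_assoc _ _ _ mu_nu_compat] leibniz _].
rewrite /lift_AA -(compA mu) -tensm_comp compm1 -(compA d f m) f_mor.1 (compA d).
rewrite leibniz compDl tensmDr compDr compDl.
congr (_ + _).
  rewrite -(compA nu) -tensm_comp comp1m tensm_compr_outer -!compA -asc_nat !compA.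
  by rewrite -mu_nu_compat -compA -tensm_compl_outer -compA -tensm_rl.
rewrite -(compA mu (idm B \ot d)) -tensm_comp comp1m tensm_compr_outer -!compA.
rewrite -asc_nat !compA -mu_assoc -compA -tensm_compl_outer -f_mor.1.
by rewrite tensm_compl_inner compA.
Qed.

Lemma univ_lift_right : univ_lift \oc nu_u = res_right f nu \oc (univ_lift \ot idm A).
Proof.
rewrite /univ_lift /res_right -compA iota_nu_u /AA_right !compA lift_AA_idl_mul compDl.
rewrite -(compA lift_AA (m \ot idm A)) -tensm_compl.
case: iota_ker => -> _; rewrite tensm0l comp0r addr0.
by rewrite -compA -tensm_compl.
Qed.

Lemma univ_lift_calc_mor : is_calc_mor mu_u nu_u d_u mu nu d f univ_lift.
Proof.
split=> //; last exact: univ_lift_d.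
by split; [exact: univ_lift_left | exact: univ_lift_right].
Qed.

End Lift.

End UniversalCalculus.

Theorem proposition3p22 (V : MonCat)
    (hV : additive_finitely_complete_cocomplete V)
    (htens : tensor_preserves_finite_colimits V) :
  (* (i) right adjoint  B |-> (B, 0)  (universal arrows with counit eps_B) *)
  (forall (B : MonoidIn V) (Z : V), is_zero_object Z ->
     is_calculus (0 : hom (B \ox Z) Z) (0 : hom (Z \ox B) Z) (0 : hom B Z) /\
     exists eps : hom B B, is_monoid_mor eps /\
       forall (A : MonoidIn V) (W : V) (mu : hom (A \ox W) W) (nu : hom (W \ox A) W)
              (d : hom A W),
         is_calculus mu nu d ->
         forall f : hom A B, is_monoid_mor f ->
           (exists (f' : hom A B) (g : hom W Z),
               is_calc_mor mu nu d (0 : hom (B \ox Z) Z) (0 : hom (Z \ox B) Z) (0 : hom B Z) f' g /\ eps \oc f' = f) /\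
           (forall (f1 f2 : hom A B) (g1 g2 : hom W Z),
               is_calc_mor mu nu d (0 : hom (B \ox Z) Z) (0 : hom (Z \ox B) Z) (0 : hom B Z) f1 g1 -> eps \oc f1 = f ->
               is_calc_mor mu nu d (0 : hom (B \ox Z) Z) (0 : hom (Z \ox B) Z) (0 : hom B Z) f2 g2 -> eps \oc f2 = f ->
               f1 = f2 /\ g1 = g2)) /\
  (* (ii) left adjoint  A |-> (A, Omega^1_{A,u})  (universal arrows with unit eta_A) *)
  (forall (A : MonoidIn V) (K : V) (iota : hom K (A \ox A))
          (mu_u : hom (A \ox K) K) (nu_u : hom (K \ox A) K) (d_u : hom A K),
     is_kernel (mmul A) iota ->
     iota \oc mu_u = AA_left A \oc (idm A \ot iota) ->
     iota \oc nu_u = AA_right A \oc (iota \ot idm A) ->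
     iota \oc d_u = (munit A \ot idm A) \oc luni A - (idm A \ot munit A) \oc runi A ->
     is_calculus mu_u nu_u d_u /\
     exists eta : hom A A, is_monoid_mor eta /\
       forall (B : MonoidIn V) (W : V) (mu : hom (B \ox W) W) (nu : hom (W \ox B) W)
              (d : hom B W),
         is_calculus mu nu d ->
         forall f : hom A B, is_monoid_mor f ->
           (exists (f' : hom A B) (g : hom K W),
               is_calc_mor mu_u nu_u d_u mu nu d f' g /\ f' \oc eta = f) /\
           (forall (f1 f2 : hom A B) (g1 g2 : hom K W),
               is_calc_mor mu_u nu_u d_u mu nu d f1 g1 -> f1 \oc eta = f ->
               is_calc_mor mu_u nu_u d_u mu nu d f2 g2 -> f2 \oc eta = f ->
               f1 = f2 /\ g1 = g2)).
Proof.
split.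
  move=> B Z zZ; split; first exact: zero_calculus.
  exists (idm B); split; first exact: monoid_mor_id.
  move=> A W mu nu d _ f f_mor; split.
    by exists f, 0; split; [exact: calc_mor_to_zero | rewrite comp1m].
  move=> f1 f2 g1 g2 _ f1_f _ f2_f; rewrite !comp1m in f1_f f2_f; subst f1 f2.
  by split=> //; exact: zero_object_hom_eq.
move=> A K iota mu_u nu_u d_u iota_ker iota_mu_u iota_nu_u iota_d_u.
have univ_calc := univ_calculus iota_ker iota_mu_u iota_nu_u iota_d_u.
split=> //; exists (idm A); split; first exact: monoid_mor_id.
move=> B W mu nu d W_calc f f_mor; split.
  exists f, (univ_lift iota mu d f); rewrite compm1; split=> //.
  exact: (univ_lift_calc_mor iota_ker iota_mu_u iota_nu_u iota_d_u W_calc f_mor).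
move=> f1 f2 g1 g2 mor1 f1_f mor2 f2_f; rewrite !compm1 in f1_f f2_f; subst f1 f2.
by split=> //; apply: calc_mor_unique mor1 mor2.
Qed.
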